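(* Let $G\subset\mathbb{R}^n$ be a convex body and let $K,L$ be compact convex subsets of $G$. Then there exist $u\in\mathbb{S}^{n-1}$ and either a point $q\in L$ such that $$\mathrm{int}\big(C_G(u,d_{\mathcal H}(K,L))+q\big)\subset (G+K\,\widetilde{\cup}\,L)\setminus(G+K),$$ or a point $q\in K$ such that $$\mathrm{int}\big(C_G(u,d_{\mathcal H}(K,L))+q\big)\subset (G+K\,\widetilde{\cup}\,L)\setminus(G+L).$$
   Context: A convex body is a compact convex set with non-empty interior. $K\,\widetilde{\cup}\,L$ is the closed convex hull of $K\cup L$; sums are Minkowski sums; $\mathrm{int}$ denotes Euclidean interior. $d_{\mathcal H}$ is the Hausdorff distance. The support function is $h_G(x)=\max\{y\cdot x: y\in G\}$, and for $u\in\mathbb{S}^{n-1}$ and $h\ge 0$ the cap of $G$ in direction $u$ with height $h$ is $C_G(u,h)=\{x\in G: u\cdot x\ge h_G(u)-h\}$. *)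

From HB Require Import structures.
From mathcomp Require Import all_boot all_order all_algebra.
From mathcomp Require Import all_classical all_reals all_analysis.
Set Implicit Arguments. Unset Strict Implicit. Unset Printing Implicit Defensive.
Import Order.TTheory GRing.Theory Num.Theory.
Import numFieldNormedType.Exports.
Local Open Scope classical_set_scope.
Local Open Scope ring_scope.

Section Defs.
Variables (R : realType) (n : nat).
Notation V := 'rV[R]_n.

Definition dotv (x y : V) : R := \sum_(i < n) x ord0 i * y ord0 i.
Definition enorm (x : V) : R := Num.sqrt (dotv x x).

Definition unit_sphere : set V := [set u | enorm u = 1].

Definition convex_body (G : set V) : Prop :=
  compact G /\ convex_set G /\ (interior G !=set0).

Definition minksum (A B : set V) : set V := [set a + b | a in A & b in B].

(* closed convex hull of K ∪ L: smallest closed convex set containing K ∪ L *)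
Definition cconv_union (K L : set V) : set V :=
  [set x | forall C : set V, closed C -> convex_set C -> K `|` L `<=` C -> C x].

Definition supp_fun (G : set V) (x : V) : R := sup [set dotv y x | y in G].

Definition capG (G : set V) (u : V) (h : R) : set V :=
  [set x | G x /\ supp_fun G u - h <= dotv u x].

Definition translate_set (A : set V) (q : V) : set V := [set a + q | a in A].

Definition edist_set (x : V) (A : set V) : R := inf [set enorm (x - a) | a in A].
Definition hausdorff (K L : set V) : R :=
  Num.max (sup [set edist_set x L | x in K]) (sup [set edist_set y K | y in L]).

End Defs.

From HB Require Import structures.
From mathcomp Require Import all_boot all_order all_algebra.
From mathcomp Require Import all_classical all_reals all_analysis.
From mathcomp Require Import ring lra.
Import Order.TTheory GRing.Theory Num.Theory.
Import numFieldNormedType.Exports.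
Set Implicit Arguments. Unset Strict Implicit. Unset Printing Implicit Defensive.
Local Open Scope classical_set_scope.
Local Open Scope ring_scope.

(* Let d be the Hausdorff distance, say d = sup_{y in L} dist(y, K) > 0.  Take q in L
   realising this supremum and a0 the nearest point of K to q; by convexity of K the
   unit vector u = (q - a0)/d satisfies u.k <= u.q - d on K, so every point of
   G + K has u-coordinate at most h_G(u) + u.q - d.  A point x interior to the
   translated cap C_G(u,d) + q stays in it after moving slightly down along u,
   hence has u-coordinate strictly larger than that; and x lies in G + q, which is
   contained in G + conv(K u L).  When d <= 0 the cap lies in a hyperplane and the
   interior is empty. *)

Section Euclidean.
Variables (R : realType) (n : nat).
Implicit Types (x y z u q : 'rV[R]_n) (A B : set 'rV[R]_n).

Lemma dotvC x y : dotv x y = dotv y x.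
Proof. by apply: eq_bigr => i _; rewrite mulrC. Qed.

Lemma dotvDl x y z : dotv (x + y) z = dotv x z + dotv y z.
Proof. by rewrite /dotv -big_split; apply: eq_bigr => i _; rewrite !mxE mulrDl. Qed.

Lemma dotvZl (a : R) x y : dotv (a *: x) y = a * dotv x y.
Proof. by rewrite /dotv mulr_sumr; apply: eq_bigr => i _; rewrite !mxE mulrA. Qed.

Lemma dotvNl x y : dotv (- x) y = - dotv x y.
Proof. by rewrite -scaleN1r dotvZl mulN1r. Qed.

Lemma dotvBl x y z : dotv (x - y) z = dotv x z - dotv y z.
Proof. by rewrite dotvDl dotvNl. Qed.

Lemma dotvDr x y z : dotv z (x + y) = dotv z x + dotv z y.
Proof. by rewrite !(dotvC z) dotvDl. Qed.

Lemma dotvZr (a : R) x y : dotv y (a *: x) = a * dotv y x.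
Proof. by rewrite !(dotvC y) dotvZl. Qed.

Lemma dotvBr x y z : dotv z (x - y) = dotv z x - dotv z y.
Proof. by rewrite !(dotvC z) dotvBl. Qed.

Lemma dotvv_ge0 x : 0 <= dotv x x.
Proof. by apply: sumr_ge0 => i _; rewrite -expr2 sqr_ge0. Qed.

Lemma dotvv_eq0 x : dotv x x = 0 -> x = 0.
Proof.
move=> /eqP; rewrite psumr_eq0 => [/allP x0|i _]; last by rewrite -expr2 sqr_ge0.
apply/rowP => i; rewrite mxE.
by have := x0 i (mem_index_enum _); rewrite /= mulf_eq0 orbb => /eqP.
Qed.

Lemma enorm_ge0 x : 0 <= enorm x.
Proof. exact: sqrtr_ge0. Qed.

Lemma enorm_sqr x : enorm x ^+ 2 = dotv x x.
Proof. by rewrite sqr_sqrtr // dotvv_ge0. Qed.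

Lemma enormN x : enorm (- x) = enorm x.
Proof. by rewrite /enorm dotvNl dotvC dotvNl opprK. Qed.

Lemma enorm0 : enorm (0 : 'rV[R]_n) = 0.
Proof. by rewrite /enorm /dotv big1 ?sqrtr0 // => i _; rewrite mxE mulr0. Qed.

Lemma unit_sphereP u : unit_sphere u <-> dotv u u = 1.
Proof.
split => [u1|uu1]; first by rewrite -enorm_sqr u1 expr1n.
by rewrite /unit_sphere /= /enorm uu1 sqrtr1.
Qed.

Lemma exists_unit_sphere : (0 < n)%N -> exists u, unit_sphere u.
Proof.
move=> n_gt0; pose i0 := Ordinal n_gt0.
exists (\row_j (j == i0)%:R); apply/unit_sphereP.
rewrite /dotv (bigD1 i0) //= big1 => [|j ji0]; rewrite !mxE.
  by rewrite eqxx mulr1 addr0.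
by rewrite (negbTE ji0) mulr0.
Qed.

Lemma cauchy_schwarz x y : dotv x y <= enorm x * enorm y.
Proof.
have [y0|yy_neq0] := eqVneq (dotv y y) 0.
  by rewrite (dotvv_eq0 y0) enorm0 mulr0 /dotv big1 // => i _; rewrite mxE mulr0.
have yy_gt0 : 0 < dotv y y by rewrite lt_neqAle eq_sym yy_neq0 dotvv_ge0.
have [xy_le0|xy_gt0] := lerP (dotv x y) 0.
  by rewrite (le_trans xy_le0) ?mulr_ge0 ?enorm_ge0.
have sqr_le : dotv x y ^+ 2 <= dotv x x * dotv y y.
  have := dotvv_ge0 (dotv y y *: x - dotv x y *: y).
  rewrite dotvBl !dotvBr !dotvZl !dotvZr (dotvC y x); nra.
rewrite -(@ler_pXn2r _ 2) ?nnegrE ?mulr_ge0 ?enorm_ge0 ?exprMn ?enorm_sqr //.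
exact: ltW.
Qed.

Lemma enorm_triangle x y : enorm (x + y) <= enorm x + enorm y.
Proof.
rewrite -(@ler_pXn2r _ 2) ?nnegrE ?addr_ge0 ?enorm_ge0 //.
rewrite sqrrD !enorm_sqr dotvDl !dotvDr (dotvC y x).
have := cauchy_schwarz x y; lra.
Qed.

Lemma continuous_dotv (T : topologicalType) (f g : T -> 'rV[R]_n) :
  continuous f -> continuous g -> continuous (fun t => dotv (f t) (g t)).
Proof.
move=> cf cg t; apply: (@continuous_big _ _ +%R 0 xpredT) => //.
  exact: add_continuous.
move=> i _ s; apply: cvgM.
  exact: (continuous_comp (cf s) (@coord_continuous R 1 n ord0 i _)).
exact: (continuous_comp (cg s) (@coord_continuous R 1 n ord0 i _)).
Qed.

Lemma continuous_enormB q : continuous (fun x => enorm (q - x)).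
Proof.
have cB : continuous (fun x : 'rV[R]_n => q - x).
  by move=> x; apply: (continuousB (f := fun=> q) (g := id)); [exact: cst_continuous|].
move=> x; apply: (@continuous_comp _ _ _ (fun x => dotv (q - x) (q - x)) Num.sqrt).
  exact: continuous_dotv.
exact: sqrt_continuous.
Qed.

Lemma edist_set_le x a A : A a -> edist_set x A <= enorm (x - a).
Proof.
move=> Aa; apply: ge_inf; last by exists a.
by exists 0 => _ [b _ <-]; exact: enorm_ge0.
Qed.

Lemma edist_set_lipschitz x y A :
  A !=set0 -> edist_set x A <= edist_set y A + enorm (x - y).
Proof.
move=> [a0 Aa0]; rewrite -lerBlDr.
apply: lb_le_inf; first by exists (enorm (y - a0)), a0.
move=> _ [a Aa <-]; rewrite lerBlDr (le_trans (edist_set_le x Aa)) //.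
have -> : x - a = (y - a) + (x - y) by rewrite [RHS]addrC addrA subrK.
exact: enorm_triangle.
Qed.

Lemma continuous_edist_set A : A !=set0 -> continuous (fun x => edist_set x A).
Proof.
move=> A0 x; have cvgP := @cvgrPdist_lt _ _ _ (nbhs x) (nbhs_filter x).
apply/cvgP => e e_gt0; have /cvgP/(_ e e_gt0) := @continuous_enormB x x.
apply: filterS => y; rewrite subrr enorm0 sub0r normrN ger0_norm ?enorm_ge0 // => xy_lt.
have xy := edist_set_lipschitz x y A0; have yx := edist_set_lipschitz y x A0.
rewrite -enormN opprB in yx; rewrite ltr_norml; apply/andP; split; lra.
Qed.

Lemma sup_eq_max (S : set R) m : S m -> (forall r, S r -> r <= m) -> sup S = m.
Proof.
move=> Sm ubm; apply/eqP; rewrite eq_le ge_sup /=; [|by exists m|exact: ubm].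
by apply: sup_upper_bound => //; split; exists m.
Qed.

Lemma inf_eq_min (S : set R) m : S m -> (forall r, S r -> m <= r) -> inf S = m.
Proof.
move=> Sm lbm; apply/eqP; rewrite eq_le ge_inf //=; last by exists m.
by apply: lb_le_inf => //; exists m.
Qed.

Lemma supp_fun_ge G u g : compact G -> G g -> dotv u g <= supp_fun G u.
Proof.
move=> cG Gg.
have [m /set_mem Gm m_max] := compact_EVT_max (f := fun x => dotv x u)
  (ex_intro _ g Gg) cG
  (continuous_subspaceT (continuous_dotv (fun=> cvg_id) (@cst_continuous _ _ u))).
rewrite /supp_fun (@sup_eq_max _ (dotv m u)); last 2 first.
- by exists m.
- by move=> _ [y Gy <-]; apply: m_max; apply/mem_set.
by rewrite dotvC; apply: m_max; apply/mem_set.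
Qed.

Lemma ler_enorm2 x y : (enorm x <= enorm y) = (dotv x x <= dotv y y).
Proof. by rewrite ler_sqrt // dotvv_ge0. Qed.

Lemma convex_set_segment A a b t :
  convex_set A -> A a -> A b -> 0 <= t <= 1 -> A (b + t *: (a - b)).
Proof.
move=> vA Aa Ab /andP[t_ge0 t_le1].
have /set_mem := vA a b (Itv01 t_ge0 t_le1) (mem_set Aa) (mem_set Ab).
by rewrite /conv /= /unstable.onem scalerBl scale1r scalerBr addrCA.
Qed.

Lemma dotv_subZ x y (t : R) :
  dotv (x - t *: y) (x - t *: y) = dotv x x - 2 * t * dotv x y + t ^+ 2 * dotv y y.
Proof. rewrite dotvBl !dotvBr !dotvZl !dotvZr (dotvC y x); ring. Qed.

(* If c = (q - a0).(a - a0) were positive, the point a0 + t (a - a0) of A with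
   t = c / (|a - a0|^2 + c + 1) would be strictly closer to q than a0. *)
Lemma nearest_point_obtuse A q a0 :
  convex_set A -> A a0 -> (forall a, A a -> enorm (q - a0) <= enorm (q - a)) ->
  forall a, A a -> dotv (q - a0) (a - a0) <= 0.
Proof.
move=> vA Aa0 a0_min a Aa; set w := q - a0; set v := a - a0.
rewrite leNgt; apply/negP => c_gt0; set c := dotv w v in c_gt0.
have vv_ge0 := dotvv_ge0 v.
have den_gt0 : 0 < dotv v v + c + 1 by lra.
pose t := c / (dotv v v + c + 1).
have t_gt0 : 0 < t by rewrite divr_gt0.
have t01 : 0 <= t <= 1 by rewrite ltW //= ler_pdivrMr // mul1r; lra.
have tden : t * (dotv v v + c + 1) = c by rewrite mulfVK // gt_eqF.
have := a0_min _ (convex_set_segment vA Aa Aa0 t01).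
rewrite ler_enorm2 -/v (_ : q - (a0 + t *: v) = w - t *: v); last first.
  by rewrite opprD addrA.
rewrite -/w dotv_subZ -/c => w_le.
have : t * (2 * c) <= t * (t * dotv v v) by lra.
rewrite ler_pM2l // => c_le; nra.
Qed.

Lemma sup_edist_separation A B :
  compact A -> convex_set A -> A !=set0 -> compact B -> B !=set0 ->
  let d := sup [set edist_set y A | y in B] in 0 < d ->
  exists u q, [/\ unit_sphere u, B q & forall a, A a -> dotv u a <= dotv u q - d].
Proof.
move=> cA vA A0 cB B0 d d_gt0.
have [q /set_mem Bq q_max] := compact_EVT_max (f := fun y => edist_set y A)
  B0 cB (continuous_subspaceT (continuous_edist_set A0)).
have [a0 /set_mem Aa0 a0_min] :=
  compact_EVT_min (f := fun a : 'rV[R]_n => enorm (q - a)) A0 cA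
  (continuous_subspaceT (@continuous_enormB q)).
have qa0_d : enorm (q - a0) = d.
  rewrite /d (@sup_eq_max _ (edist_set q A)); last 2 first.
  - by exists q.
  - by move=> _ [y By <-]; apply/q_max/mem_set.
  apply/esym/inf_eq_min; first by exists a0.
  by move=> _ [a Aa <-]; apply/a0_min/mem_set.
have obtuse := nearest_point_obtuse vA Aa0 (fun a Aa => a0_min a (mem_set Aa)).
have ww : dotv (q - a0) (q - a0) = d ^+ 2 by rewrite -enorm_sqr qa0_d.
exists (d^-1 *: (q - a0)), q; split => //.
  by apply/unit_sphereP; rewrite dotvZl dotvZr ww; field; rewrite gt_eqF.
have d_sqr : d^-1 * d ^+ 2 = d by rewrite expr2 mulKf ?gt_eqF.
move=> a Aa; rewrite !dotvZl -{3}d_sqr -mulrBr ler_pM2l ?invr_gt0 //.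
by have := obtuse a Aa; rewrite -ww !dotvBr; lra.
Qed.

Lemma interior_along_dir S x u :
  interior S x -> exists2 e : R, 0 < e & S (x + e *: u) /\ S (x - e *: u).
Proof.
move=> Sx.
have line_cont : {for 0, continuous (fun t : R => x + t *: u)}.
  by apply: cvgD; [exact: cvg_cst | apply: cvgZ; [exact: cvg_id | exact: cvg_cst]].
have Sx0 : \forall y \near x + 0 *: u, S y by rewrite scale0r addr0.
have /nbhs_ballP [e /= e_gt0 ball_S] := near_fun _ _ _ line_cont Sx0.
exists (e / 2); first by rewrite divr_gt0.
split; last rewrite -scaleNr; apply: ball_S;
  by rewrite -ball_normE /ball_ /= sub0r ?opprK ?normrN ger0_norm; lra.
Qed.

(* For small e > 0, x + e u lies in G + q and x - e u in the translated cap. *)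
Lemma interior_translate_capG G u d q x :
  compact G -> unit_sphere u ->
  interior (translate_set (capG G u d) q) x ->
  supp_fun G u - d + dotv u q < dotv u x < supp_fun G u + dotv u q.
Proof.
move=> cG /unit_sphereP uu1 /(interior_along_dir u)
  [e e_gt0 [[c1 [Gc1 _] c1_eq] [c2 [_ c2_cap] c2_eq]]].
have := supp_fun_ge u cG Gc1.
have : dotv u (x + e *: u) = dotv u (c1 + q) by rewrite c1_eq.
have : dotv u (x - e *: u) = dotv u (c2 + q) by rewrite c2_eq.
rewrite dotvBr !dotvDr dotvZr uu1 => ? ? ?; apply/andP; split; lra.
Qed.

Lemma interior_translate_capG_le0 G u d q :
  compact G -> unit_sphere u -> d <= 0 ->
  interior (translate_set (capG G u d) q) = set0.
Proof.
move=> cG u1 d_le0; apply/seteqP; split => // x /(interior_translate_capG cG u1).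
move=> /andP[lb ub]; have := lt_trans lb ub; lra.
Qed.

Lemma interior_translate_capG_sub G K L E u d q :
  compact G -> unit_sphere u -> (K `|` L) q ->
  (forall k, E k -> dotv u k <= dotv u q - d) ->
  interior (translate_set (capG G u d) q) `<=`
    minksum G (cconv_union K L) `\` minksum G E.
Proof.
move=> cG u1 KLq E_sep x x_int; split.
  have /interior_subset [c [Gc _] <-] := x_int.
  by exists c => //; exists q => // C _ _; apply.
move=> [g Gg [k Ek x_eq]].
have /andP[lb _] := interior_translate_capG cG u1 x_int.
have := E_sep k Ek; have := supp_fun_ge u cG Gg.
by rewrite -x_eq dotvDr in lb; lra.
Qed.
End Euclidean.

Theorem lemma3p5 (R : realType) (n : nat) (G K L : set 'rV[R]_n) :
  (0 < n)%N ->
  convex_body G ->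
  compact K -> convex_set K -> K !=set0 -> K `<=` G ->
  compact L -> convex_set L -> L !=set0 -> L `<=` G ->
  exists u : 'rV[R]_n, unit_sphere u /\
    ((exists2 q, L q &
        interior (translate_set (capG G u (hausdorff K L)) q) `<=`
          minksum G (cconv_union K L) `\` minksum G K) \/
     (exists2 q, K q &
        interior (translate_set (capG G u (hausdorff K L)) q) `<=`
          minksum G (cconv_union K L) `\` minksum G L)).
Proof.
move=> n_gt0 [cG _] cK vK K0 _ cL vL L0 _.
have [d_le0|] := lerP (hausdorff K L) 0.
  have [u u1] := exists_unit_sphere R n_gt0; have [q Lq] := L0.
  exists u; split => //; left; exists q => //.
  by rewrite interior_translate_capG_le0.
rewrite /hausdorff; set dK := sup _; set dL := sup _.
case: (lerP dK dL) => _ d_gt0.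
- have [u [q [u1 Lq K_sep]]] := sup_edist_separation cK vK K0 cL L0 d_gt0.
  exists u; split => //; left; exists q => //.
  by apply: interior_translate_capG_sub => //; right.
- have [u [q [u1 Kq L_sep]]] := sup_edist_separation cL vL L0 cK K0 d_gt0.
  exists u; split => //; right; exists q => //.
  by apply: interior_translate_capG_sub => //; left.
Qed.
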